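(* Consider a Kepler billiard in the plane: a particle moves under a Kepler(-Coulomb) potential centered at $F$ and is elastically reflected at a wall $\mathbf{K}$ which is either an ellipse or a branch of a hyperbola with foci $F$ and $F'$. Choose coordinates with $F'=(0,0)$ and $F=(-2c_{\mathbf{K}},0)$, and let $a_{\mathbf{K}}$ be the semi-major axis of $\mathbf{K}$. Fix a non-zero energy, so that the Keplerian arcs are arcs of conics with focus $F$ and common semi-major axis $a$, and let $F_1,F_2,\dots$ be the second foci of the successive Keplerian arcs along a billiard trajectory; these lie on a circle centered at $F'$ of radius $R$. Then there are real numbers $x_0=x_0(a,R)$ and $r_0=r_0(a,R)$, depending only on $\mathbf{K}$ and given by quadratic functions of $a$ and $R$, such that every line $\ell(F_iF_{i+1})$ through consecutive second foci is tangent to the circle with center $(x_0,0)$ and radius $|r_0|$ (the foci-caustic circle).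
   Context: Elastic reflection means the velocity is reflected with respect to the tangent line to $\mathbf{K}$ at the impact point, preserving energy; the semi-major axis $a$ of the Keplerian orbit is preserved under reflections. The second focus of an elliptic Keplerian orbit $\{P:|PF|+|PF_i|=2a\}$ is $F_i$; for hyperbolic orbits it is the other focus of the hyperbola containing the arc. It is a known fact that the second foci along a trajectory all lie on a circle centered at $F'$; its radius $R$ is a conserved quantity. *)

From HB Require Import structures.
From mathcomp Require Import all_boot all_order all_algebra.
From mathcomp Require Import reals.
Set Implicit Arguments. Unset Strict Implicit. Unset Printing Implicit Defensive.
Import Order.TTheory GRing.Theory Num.Theory.
Local Open Scope ring_scope.

Section KeplerBilliard.
Variable R : realType.

Definition pt := (R * R)%type.
Definition padd (p q : pt) : pt := (p.1 + q.1, p.2 + q.2).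
Definition psub (p q : pt) : pt := (p.1 - q.1, p.2 - q.2).
Definition pscale (k : R) (p : pt) : pt := (k * p.1, k * p.2).
Definition dot (p q : pt) : R := p.1 * q.1 + p.2 * q.2.
Definition cross (p q : pt) : R := p.1 * q.2 - p.2 * q.1.
Definition pnorm (p : pt) : R := Num.sqrt (dot p p).
Definition dist (p q : pt) : R := pnorm (psub p q).
Definition unitv (p : pt) : pt := pscale (pnorm p)^-1 p.

Definition Fp : pt := (0, 0).
Definition FK (c : R) : pt := (- (2 * c), 0).

(* The wall K: an ellipse, or one branch of a hyperbola, with foci F, F'
   and semi-major axis aK.  [WHyp true] : |XF| - |XF'| = 2 aK,
   [WHyp false] : |XF| - |XF'| = - 2 aK. *)
Inductive wall_kind := WEll | WHyp of bool.

Definition wall_ok (wk : wall_kind) (aK c : R) : Prop :=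
  match wk with
  | WEll => 0 < c /\ c < aK
  | WHyp _ => 0 < aK /\ aK < c
  end.

Definition on_wall (wk : wall_kind) (aK c : R) (X : pt) : Prop :=
  match wk with
  | WEll => dist X (FK c) + dist X Fp = 2 * aK
  | WHyp b => dist X (FK c) - dist X Fp = (if b then 2 * aK else - (2 * aK))
  end.

(* a normal vector of K at X (gradient of the defining function) *)
Definition wall_normal (wk : wall_kind) (c : R) (X : pt) : pt :=
  match wk with
  | WEll => padd (unitv (psub X (FK c))) (unitv (psub X Fp))
  | WHyp _ => psub (unitv (psub X (FK c))) (unitv (psub X Fp))
  end.

(* elastic reflection of v w.r.t. the line orthogonal to n (the tangent line) *)
Definition reflect_tangent (n v : pt) : pt :=
  psub v (pscale (2 * dot v n / dot n n) n).

(* Keplerian arcs at fixed non-zero energy: conics with focus F and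
   semi-major axis a > 0.
   OEll    : negative energy, attractive:  |XF| + |XG| = 2a
   OHypAtt : positive energy, attractive:  |XG| - |XF| = 2a
   OHypRep : positive energy, repulsive:   |XF| - |XG| = 2a
   G is the second focus. *)
Inductive orbit_kind := OEll | OHypAtt | OHypRep.

Definition on_orbit (ok : orbit_kind) (c a : R) (G X : pt) : Prop :=
  match ok with
  | OEll => dist X (FK c) + dist X G = 2 * a
  | OHypAtt => dist X G - dist X (FK c) = 2 * a
  | OHypRep => dist X (FK c) - dist X G = 2 * a
  end.

(* non-degenerate conic (excludes collision/segment orbits) *)
Definition orbit_nondeg (ok : orbit_kind) (c a : R) (G : pt) : Prop :=
  match ok with
  | OEll => dist (FK c) G < 2 * a
  | _ => 2 * a < dist (FK c) G
  end.

Definition orbit_normal (ok : orbit_kind) (c : R) (G X : pt) : pt :=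
  match ok with
  | OEll => padd (unitv (psub X (FK c))) (unitv (psub X G))
  | _ => psub (unitv (psub X (FK c))) (unitv (psub X G))
  end.

(* A Kepler billiard trajectory: impact points P i on K, the i-th Keplerian
   arc goes from P i to P (i+1), lies on the conic with focus F, semi-major
   axis a and second focus G i; v i is its (nonzero, tangent) velocity on
   arrival at P (i+1); after elastic reflection at P (i+1) the velocity is
   tangent to the next arc, of second focus G (i+1). *)
Definition billiard_traj (wk : wall_kind) (aK c : R) (ok : orbit_kind) (a : R)
    (P G v : nat -> pt) : Prop :=
  forall i : nat,
    [/\ on_wall wk aK c (P i),
        orbit_nondeg ok c a (G i),
        on_orbit ok c a (G i) (P i),
        on_orbit ok c a (G i) (P i.+1)
      & [/\ v i <> (0, 0),
            dot (v i) (orbit_normal ok c (G i) (P i.+1)) = 0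
          & dot (reflect_tangent (wall_normal wk c (P i.+1)) (v i))
                (orbit_normal ok c (G i.+1) (P i.+1)) = 0]].

(* the line through distinct points A, B is tangent to the circle of
   center C and radius r (>= 0): distance from C to the line equals r *)
Definition line_tangent_circle (A B C : pt) (r : R) : Prop :=
  A <> B /\ `| cross (psub B A) (psub C A) | = r * pnorm (psub B A).

Definition quadratic2 (f : R -> R -> R) : Prop :=
  exists k0 k1 k2 k3 k4 k5 : R, forall x y : R,
    f x y = k0 + k1 * x + k2 * y + k3 * x ^+ 2 + k4 * x * y + k5 * y ^+ 2.

End KeplerBilliard.

From HB Require Import structures.
From mathcomp Require Import all_boot all_order all_algebra.
From mathcomp Require Import reals.
From mathcomp Require Import ring lra.
Set Implicit Arguments. Unset Strict Implicit. Unset Printing Implicit Defensive.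
Import Order.TTheory GRing.Theory Num.Theory.
Local Open Scope ring_scope.

(** Let P = P_(i+1) be the impact point between the arcs with
   second foci G_i and G_(i+1), and put F' = 0.  On the wall, |PF| is affine
   in |P|, and on a Keplerian arc |PG| is affine in |PF|; hence
   |PG_i| = |PG_(i+1)| = e |P| + tau for a sign e and a constant tau.  Both
   foci also lie on the circle |G| = R, so the chord G_i G_(i+1) is the radical
   axis of two circles: it is orthogonal to P, at signed distance
   ((R^2 - tau^2)/2 - e tau |P|) / |P| from the origin.  The
   focus-directrix property of the wall makes the abscissa of P affine in |P|
   as well, so for a suitable x0 the signed distance from (x0, 0) to the chord
   no longer depends on P.  The reflection law enters only through the
   conservation of R, which is a hypothesis of the theorem. *)

Section PlaneGeometry.
Variable R : realType.
Implicit Types (p u v w A B C X Y : pt R).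

Lemma dot_self_ge0 p : 0 <= dot p p.
Proof. by rewrite /dot addr_ge0 // -expr2 sqr_ge0. Qed.

Lemma pnorm_ge0 p : 0 <= pnorm p.
Proof. exact: sqrtr_ge0. Qed.

Lemma pnorm_sqr p : pnorm p ^+ 2 = dot p p.
Proof. by rewrite sqr_sqrtr // dot_self_ge0. Qed.

Lemma dot_sqr_add_cross_sqr u v :
  dot u v ^+ 2 + cross u v ^+ 2 = dot u u * dot v v.
Proof. by rewrite /dot /cross; ring. Qed.

Lemma normr_cross_orthogonal u v :
  dot u v = 0 -> `|cross u v| = pnorm u * pnorm v.
Proof.
move=> uv0; have cross2 : cross u v ^+ 2 = dot u u * dot v v.
  by rewrite -dot_sqr_add_cross_sqr uv0 expr0n add0r.
by rewrite -sqrtr_sqr cross2 sqrtrM // dot_self_ge0.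
Qed.

Lemma cross_mul_dot_self u w p :
  cross u w * dot p p = dot u p * cross p w + cross u p * dot p w.
Proof. by rewrite /dot /cross; ring. Qed.

Lemma line_tangent_circle_normal p A B C (r : R) :
  0 < pnorm p -> A <> B -> dot p A = dot p B ->
  dot p C - dot p A = r * pnorm p ->
  line_tangent_circle A B C `|r|.
Proof.
move=> p_gt0 AB pA_pB pC; split=> //.
have up0 : dot (psub B A) p = 0.
  by move: pA_pB; rewrite /dot /psub /=; lra.
have pw : dot p (psub C A) = r * pnorm p.
  by rewrite -pC /dot /psub /=; ring.
have p2_neq0 : pnorm p ^+ 2 != 0 by rewrite expf_neq0 // gt_eqF.
apply: (mulIf p2_neq0); rewrite -[X in _ * X]ger0_norm ?exprn_ge0 ?pnorm_ge0 //.
rewrite -normrM pnorm_sqr cross_mul_dot_self up0 mul0r add0r pw.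
rewrite normrM normr_cross_orthogonal // normrM (ger0_norm (ltW p_gt0)).
by rewrite -pnorm_sqr; ring.
Qed.

Lemma dist_sqr X Y : dist X Y ^+ 2 = pnorm X ^+ 2 - 2 * dot X Y + pnorm Y ^+ 2.
Proof. by rewrite /dist !pnorm_sqr /dot /psub /=; ring. Qed.

Lemma dist_Fp X : dist X (Fp R) = pnorm X.
Proof. by case: X => x1 x2; rewrite /dist /psub /= !subr0. Qed.

Lemma dist_FK_sqr X (c : R) :
  dist X (FK c) ^+ 2 = pnorm X ^+ 2 + 4 * c * X.1 + 4 * c ^+ 2.
Proof. by rewrite dist_sqr !pnorm_sqr /dot /FK /=; ring. Qed.

Lemma focal_abscissa X (c s t : R) :
  s ^+ 2 = 1 -> dist X (FK c) = s * pnorm X + t ->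
  4 * c * X.1 = 2 * s * t * pnorm X + t ^+ 2 - 4 * c ^+ 2.
Proof.
move=> s2 hX; have := dist_FK_sqr X c; rewrite hX.
have -> : (s * pnorm X + t) ^+ 2 =
  s ^+ 2 * pnorm X ^+ 2 + 2 * s * t * pnorm X + t ^+ 2 by ring.
by rewrite s2 mul1r; lra.
Qed.

Lemma dot_of_focal_dist X Y (e tau rad : R) :
  e ^+ 2 = 1 -> pnorm Y = rad -> dist X Y = e * pnorm X + tau ->
  2 * dot X Y = rad ^+ 2 - tau ^+ 2 - 2 * e * tau * pnorm X.
Proof.
move=> e2 hY hXY; have := dist_sqr X Y; rewrite hXY hY.
have -> : (e * pnorm X + tau) ^+ 2 =
  e ^+ 2 * pnorm X ^+ 2 + 2 * e * tau * pnorm X + tau ^+ 2 by ring.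
by rewrite e2 mul1r; lra.
Qed.

Definition caustic_center (c aK tau rad : R) : R :=
  c / (2 * (aK ^+ 2 - c ^+ 2)) * (rad ^+ 2 - tau ^+ 2).

Definition caustic_radius (c aK s t e tau rad : R) : R :=
  s * t / (2 * c) * caustic_center c aK tau rad + e * tau.

Lemma chord_tangent_caustic (c aK s t e tau rad : R) P A B :
  c != 0 -> aK ^+ 2 != c ^+ 2 -> s ^+ 2 = 1 -> e ^+ 2 = 1 ->
  t ^+ 2 = 4 * aK ^+ 2 ->
  dist P (FK c) = s * pnorm P + t ->
  dist P A = e * pnorm P + tau -> dist P B = e * pnorm P + tau ->
  pnorm A = rad -> pnorm B = rad -> A <> B ->
  line_tangent_circle A B (caustic_center c aK tau rad, 0)
    `|caustic_radius c aK s t e tau rad|.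
Proof.
move=> c_neq0 aKc s2 e2 t2 hP hA hB nA nB AB.
have P1 := focal_abscissa s2 hP; rewrite t2 in P1.
have dA := dot_of_focal_dist e2 nA hA; have dB := dot_of_focal_dist e2 nB hB.
have P_gt0 : 0 < pnorm P.
  (* F' is not on the wall, as aK ^+ 2 != c ^+ 2. *)
  rewrite lt_neqAle pnorm_ge0 andbT; apply: contra aKc => /eqP P0.
  have : P.1 ^+ 2 <= pnorm P ^+ 2 by rewrite pnorm_sqr /dot ler_wpDr // -expr2 sqr_ge0.
  rewrite -P0 expr0n /= => P1_le0; apply/eqP.
  have P1_0 : P.1 = 0 by apply/eqP; rewrite -sqrf_eq0 eq_le P1_le0 sqr_ge0.
  by move: P1; rewrite -P0 P1_0; lra.
apply: (line_tangent_circle_normal P_gt0 AB); first lra.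
have -> : dot P (caustic_center c aK tau rad, 0) =
  caustic_center c aK tau rad * P.1 by rewrite /dot /=; ring.
have -> : P.1 = (2 * s * t * pnorm P + 4 * aK ^+ 2 - 4 * c ^+ 2) / (4 * c).
  by rewrite -P1; field.
have -> : dot P A = (rad ^+ 2 - tau ^+ 2 - 2 * e * tau * pnorm P) / 2.
  by rewrite -dA; field.
rewrite /caustic_radius /caustic_center; field.
by rewrite c_neq0 subr_eq0 aKc.
Qed.

Lemma quadratic2_caustic (f : R -> R -> R) (k l alpha beta : R) :
  (forall a rad, f a rad =
     k * (rad ^+ 2 - (alpha + beta * a) ^+ 2) + l * (alpha + beta * a)) ->
  quadratic2 f.
Proof.
move=> hf; exists (l * alpha - k * alpha ^+ 2), (l * beta - 2 * k * alpha * beta), 0,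
  (- k * beta ^+ 2), 0, k.
by move=> a rad; rewrite hf; ring.
Qed.

End PlaneGeometry.

Section KeplerFoci.
Variable R : realType.

Definition wall_sign (wk : wall_kind) : R := if wk is WEll then -1 else 1.

Definition wall_shift (wk : wall_kind) (aK : R) : R :=
  if wk is WHyp false then - (2 * aK) else 2 * aK.

Definition orbit_sign (ok : orbit_kind) : R := if ok is OEll then -1 else 1.

Definition orbit_shift (ok : orbit_kind) : R := if ok is OHypRep then -2 else 2.

Definition focal_offset (wk : wall_kind) (ok : orbit_kind) (aK a : R) : R :=
  orbit_sign ok * wall_shift wk aK + orbit_shift ok * a.

Lemma wall_sign_sqr wk : wall_sign wk ^+ 2 = 1.
Proof. by case: wk; rewrite /= ?sqrrN expr1n. Qed.

Lemma orbit_sign_sqr ok : orbit_sign ok ^+ 2 = 1.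
Proof. by case: ok; rewrite /= ?sqrrN expr1n. Qed.

Lemma wall_shift_sqr wk (aK : R) : wall_shift wk aK ^+ 2 = 4 * aK ^+ 2.
Proof. by case: wk => [|[]]; rewrite /= ?sqrrN exprMn; congr (_ * _); ring. Qed.

Lemma on_wall_focal wk (aK c : R) X :
  on_wall wk aK c X -> dist X (FK c) = wall_sign wk * pnorm X + wall_shift wk aK.
Proof. by rewrite -dist_Fp; case: wk => [|[]] /=; lra. Qed.

Lemma on_orbit_focal ok (c a : R) G X :
  on_orbit ok c a G X ->
  dist X G = orbit_sign ok * dist X (FK c) + orbit_shift ok * a.
Proof. by case: ok => /=; lra. Qed.

Lemma dist_impact_second_focus wk ok (aK c a : R) G X :
  on_wall wk aK c X -> on_orbit ok c a G X ->
  dist X G = wall_sign wk * orbit_sign ok * pnorm X + focal_offset wk ok aK a.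
Proof.
move=> /on_wall_focal hX /on_orbit_focal ->; rewrite hX /focal_offset; ring.
Qed.

Lemma wall_ok_nondeg wk (aK c : R) :
  wall_ok wk aK c -> c != 0 /\ aK ^+ 2 != c ^+ 2.
Proof.
case: wk => [|b] /= [h1 h2]; split; try by rewrite gt_eqF //; lra.
- by rewrite gt_eqF // ltr_pXn2r ?nnegrE //; lra.
- by rewrite lt_eqF // ltr_pXn2r ?nnegrE //; lra.
Qed.

End KeplerFoci.

Theorem mainTheorem2 (R : realType) (wk : wall_kind) (aK c : R) (ok : orbit_kind) :
  wall_ok wk aK c ->
  exists x0 r0 : R -> R -> R,
    [/\ quadratic2 x0, quadratic2 r0 &
      forall (a rad : R) (P G v : nat -> pt R),
        0 < a ->
        billiard_traj wk aK c ok a P G v ->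
        (forall i, pnorm (G i) = rad) ->
        forall i, G i <> G i.+1 ->
          line_tangent_circle (G i) (G i.+1) (x0 a rad, 0) `|r0 a rad| ].
Proof.
move=> /wall_ok_nondeg [c_neq0 aKc].
pose s := wall_sign R wk; pose t := wall_shift wk aK.
pose e := s * orbit_sign R ok; pose tau := focal_offset wk ok aK.
exists (fun a rad => caustic_center c aK (tau a) rad),
       (fun a rad => caustic_radius c aK s t e (tau a) rad).
split.
- by apply: (quadratic2_caustic (l := 0)) => a rad; rewrite mul0r addr0.
- apply: (quadratic2_caustic (l := e)) => a rad.
  by rewrite /caustic_radius /caustic_center mulrA.
move=> a rad P G v _ traj onG i GG.
have [_ _ _ Gi_orbit _] := traj i; have [P_wall _ Gi1_orbit _ _] := traj i.+1.
apply: (chord_tangent_caustic (P := P i.+1)) GG => //.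
- exact: wall_sign_sqr.
- by rewrite exprMn wall_sign_sqr orbit_sign_sqr mul1r.
- exact: wall_shift_sqr.
- exact: on_wall_focal P_wall.
- exact: dist_impact_second_focus P_wall Gi_orbit.
- exact: dist_impact_second_focus P_wall Gi1_orbit.
Qed.
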